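(* For every $\pi\in S_n$, the lattice $G/\beta_\pi$ is a slim semimodular lattice of length $n$.
   Context: $G$ is the direct product of two chains $0=c_0\prec\dots\prec c_n$ and $0=d_0\prec\dots\prec d_n$, its elements written uniquely as $c_i\vee d_j$. A join-congruence is an equivalence relation compatible with $\vee$. For $\pi\in S_n$ (permutations of $\{1,\dots,n\}$), $\beta_\pi$ is the join, in the lattice of join-congruences of $(G;\vee)$, of the smallest join-congruences collapsing $\{c_{i-1}\vee d_{\pi(i)},c_i\vee d_{\pi(i)-1},c_i\vee d_{\pi(i)}\}$, $i=1,\dots,n$; the quotient join-semilattice $G/\beta_\pi$ is finite with $0$, hence a lattice. A finite lattice is slim if its join-irreducible elements (including $0$) contain no three-element antichain; semimodular means $a\prec b$ implies $a\vee c\preceq b\vee c$. *)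

From mathcomp Require Import all_boot all_order all_fingroup.
Set Implicit Arguments. Unset Strict Implicit. Unset Printing Implicit Defensive.

Section JoinSemilattice.
Variables (T : finType) (join : T -> T -> T) (bot : T).

Definition jle (x y : T) : bool := join x y == y.
Definition jlt (x y : T) : bool := (x != y) && jle x y.
Definition jcomparable (x y : T) : bool := jle x y || jle y x.
Definition jcovers (x y : T) : bool := jlt x y && [forall z, ~~ (jlt x z && jlt z y)].
Definition jcovers_eq (x y : T) : bool := (x == y) || jcovers x y.

(* (T, join, bot) is a join-semilattice with least element bot
   (finite, hence a lattice) *)
Definition jsl_axioms : Prop :=
  [/\ associative join, commutative join, idempotent_op join & left_id bot join].

Definition jirr (x : T) : bool :=
  (x != bot) && [forall y, forall z, (join y z == x) ==> ((y == x) || (z == x))].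
Definition jirr0 (x : T) : bool := (x == bot) || jirr x.

Definition slim : bool :=
  [forall x, forall y, forall z,
     [&& jirr0 x, jirr0 y & jirr0 z] ==>
     [|| jcomparable x y, jcomparable y z | jcomparable x z]].

Definition semimodular : Prop :=
  forall a b c : T, jcovers a b -> jcovers_eq (join a c) (join b c).

Definition jchain (C : {set T}) : bool := [forall x in C, forall y in C, jcomparable x y].
Definition length_is (k : nat) : Prop :=
  (exists C : {set T}, jchain C /\ #|C| = k.+1) /\
  (forall C : {set T}, jchain C -> #|C| <= k.+1).

End JoinSemilattice.

(* The element c_i \/ d_j is represented by the pair (i, j). *)
Notation grid n := ('I_n.+1 * 'I_n.+1)%type.

Definition gjoin n (x y : grid n) : grid n :=
  (inord (maxn x.1 y.1), inord (maxn x.2 y.2)).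

Definition is_jcong n (r : {set grid n * grid n}) : bool :=
  [&& [forall x, (x, x) \in r],
      [forall x, forall y, ((x, y) \in r) ==> ((y, x) \in r)],
      [forall x, forall y, forall z, ((x, y) \in r) && ((y, z) \in r) ==> ((x, z) \in r)] &
      [forall x, forall y, forall z, ((x, y) \in r) ==> ((gjoin x z, gjoin y z) \in r)]].

Definition cg n (S : {set grid n * grid n}) : {set grid n * grid n} :=
  \bigcap_(r | is_jcong r && (S \subset r)) r.

Definition collapse3 n (a b c : grid n) : {set grid n * grid n} :=
  [set (a, b); (b, c); (a, c)].

(* For pi in S_n (on {1..n}) we use p : 'S_n on {0..n-1} with pi(i) = p(i-1)+1.
   For k = i-1 : 'I_n, the triple is
   {c_{i-1} \/ d_{pi i}, c_i \/ d_{pi i - 1}, c_i \/ d_{pi i}}. *)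
Definition tri n (p : 'S_n) (k : 'I_n) : {set grid n * grid n} :=
  collapse3 (inord k, inord (p k).+1) (inord k.+1, inord (p k)) (inord k.+1, inord (p k).+1).

(* beta_pi: the join, in the lattice of join-congruences, of the congruences con(tri k) *)
Definition beta n (p : 'S_n) : {set grid n * grid n} :=
  cg (\bigcup_(k : 'I_n) cg (tri p k)).

Definition cls n (p : 'S_n) (x : grid n) : {set grid n} := [set y | (x, y) \in beta p].
Definition qset n (p : 'S_n) : {set {set grid n}} := [set cls p x | x : grid n].

Notation quot n p := {A : {set grid n} | A \in qset p}.

Lemma cls_in n (p : 'S_n) (x : grid n) : cls p x \in qset p.
Proof. exact: imset_f. Qed.

Definition qcl n (p : 'S_n) (x : grid n) : quot n p := exist _ (cls p x) (cls_in p x).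
Definition qrep n (p : 'S_n) (A : quot n p) : grid n := odflt (ord0, ord0) [pick x in val A].
Definition qjoin n (p : 'S_n) (A B : quot n p) : quot n p := qcl p (gjoin (qrep A) (qrep B)).
Definition qbot n (p : 'S_n) : quot n p := qcl p (ord0, ord0).

(* Call a grid point stable if none of the collapsed triangles moves it one
   step right or up inside its beta-class.  Every point u lies below a least
   stable point cl u, reached by such moves, and beta is exactly the kernel of
   cl; so G/beta is the semilattice of stable points with join cl (u \/ v).
   The rank rk (x, y) = #{i | i < x or p i < y} is invariant under moves, goes
   up by exactly one along a unit step out of a stable point, and by at most one
   along any unit step: this yields semimodularity, and with rk <= n also length
   n, attained along the first axis.  Each element is the join of its
   projections to the two axes, so the join-irreducibles lie on two chains,
   whence slimness. *)

From mathcomp Require Import all_boot all_order all_fingroup.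
From mathcomp Require Import zify.
Set Implicit Arguments. Unset Strict Implicit. Unset Printing Implicit Defensive.

Section JoinStructure.
Variables (T : finType) (join : T -> T -> T).

Lemma slim_of_jchains bot (X Y : {set T}) :
  jchain join X -> jchain join Y ->
  (forall x, jirr0 join bot x -> (x \in X) || (x \in Y)) -> slim join bot.
Proof.
move=> /forall_inP chX /forall_inP chY cover.
have cmpX x y : x \in X -> y \in X -> jcomparable join x y.
  by move=> xX yX; apply: (forall_inP (chX x xX)).
have cmpY x y : x \in Y -> y \in Y -> jcomparable join x y.
  by move=> xY yY; apply: (forall_inP (chY x xY)).
apply/forallP => x; apply/forallP => y; apply/forallP => z.
apply/implyP => /and3P[/cover/orP xXY /cover/orP yXY /cover/orP zXY].
case: xXY => xXY; case: yXY => yXY; case: zXY => zXY.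
all: apply/or3P; first [ by constructor 1; auto | by constructor 2; auto | by constructor 3; auto ].
Qed.

Variable r : T -> nat.
Hypothesis r_lt : forall x y, jlt join x y -> r x < r y.

Lemma jcovers_eq_of_rank x y : jle join x y -> r y <= (r x).+1 -> jcovers_eq join x y.
Proof.
rewrite /jcovers_eq => lexy ryx; case: eqVneq => //= nexy.
rewrite /jcovers /jlt nexy lexy; apply/forallP => z; apply/negP => /andP[xz zy].
by have := r_lt xz; have := r_lt zy; lia.
Qed.

Lemma jchain_card_le k (C : {set T}) :
  (forall x, r x <= k) -> jchain join C -> #|C| <= k.+1.
Proof.
move=> r_le /forall_inP chainC.
have r_neq x y : x != y -> jle join x y -> r x != r y.
  by move=> nexy lexy; rewrite neq_ltn r_lt // /jlt nexy.
have r_inj : {in C &, injective (fun x => inord (r x) : 'I_k.+1)}.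
  move=> x y xC yC /(congr1 val); rewrite /= !inordK ?ltnS // => rxy.
  apply/eqP/negPn/negP => nexy.
  case/orP: (forall_inP (chainC x xC) y yC) => [/(r_neq _ _ nexy)|].
    by rewrite rxy eqxx.
  by rewrite eq_sym in nexy => /(r_neq _ _ nexy); rewrite rxy eqxx.
by rewrite -(card_ord k.+1); apply: leq_card_in r_inj.
Qed.

End JoinStructure.

Section Grid.
Variable n : nat.
Implicit Types u v w : grid n.

Lemma grid_eq u v : (u.1 : nat) = v.1 -> (u.2 : nat) = v.2 -> u = v.
Proof. by case: u v => [a b] [c d] /= /val_inj -> /val_inj ->. Qed.

Lemma gjoin_fst u v : ((gjoin u v).1 : nat) = maxn u.1 v.1.
Proof. by rewrite /= inordK // gtn_max !ltn_ord. Qed.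

Lemma gjoin_snd u v : ((gjoin u v).2 : nat) = maxn u.2 v.2.
Proof. by rewrite /= inordK // gtn_max !ltn_ord. Qed.

Lemma gjoinC : commutative (@gjoin n).
Proof. by move=> u v; apply: grid_eq; rewrite !(gjoin_fst, gjoin_snd) maxnC. Qed.

Lemma gjoinA : associative (@gjoin n).
Proof. by move=> u v w; apply: grid_eq; rewrite !(gjoin_fst, gjoin_snd) maxnA. Qed.

Definition gle u v := ((u.1 : nat) <= v.1) && ((u.2 : nat) <= v.2).

Lemma gle_refl u : gle u u.
Proof. by rewrite /gle !leqnn. Qed.

Lemma gle_trans v u w : gle u v -> gle v w -> gle u w.
Proof. by rewrite /gle => /andP[? ?] /andP[? ?]; apply/andP; split; lia. Qed.

Lemma gle_anti u v : gle u v -> gle v u -> u = v.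
Proof. by rewrite /gle => /andP[? ?] /andP[? ?]; apply: grid_eq; lia. Qed.

Lemma gle_joinl u v : gle u (gjoin u v).
Proof. by rewrite /gle gjoin_fst gjoin_snd; apply/andP; split; lia. Qed.

Lemma gle_joinr u v : gle v (gjoin u v).
Proof. by rewrite gjoinC gle_joinl. Qed.

Lemma gle_join u v w : gle u w -> gle v w -> gle (gjoin u v) w.
Proof.
by rewrite /gle gjoin_fst gjoin_snd => /andP[? ?] /andP[? ?]; apply/andP; split; lia.
Qed.

Lemma gjoin_idPr u v : gle u v -> gjoin u v = v.
Proof. by rewrite /gle => /andP[? ?]; apply: grid_eq; rewrite ?gjoin_fst ?gjoin_snd; lia. Qed.

Lemma gle_join2r u v w : gle u v -> gle (gjoin u w) (gjoin v w).
Proof. by rewrite /gle !gjoin_fst !gjoin_snd => /andP[? ?]; apply/andP; split; lia. Qed.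

Lemma inord_val (k : 'I_n) : (inord k : 'I_n.+1) = k :> nat.
Proof. by rewrite inordK // ltnS ltnW. Qed.

Lemma inord_valS (k : 'I_n) : (inord k.+1 : 'I_n.+1) = k.+1 :> nat.
Proof. by rewrite inordK // ltnS. Qed.

Definition incx u : grid n := (inord u.1.+1, u.2).
Definition incy u : grid n := (u.1, inord u.2.+1).

Lemma incx_fst u : u.1 < n -> (incx u).1 = u.1.+1 :> nat.
Proof. by move=> lt; rewrite /= inordK. Qed.

Lemma incy_snd u : u.2 < n -> (incy u).2 = u.2.+1 :> nat.
Proof. by move=> lt; rewrite /= inordK. Qed.

Lemma gle_incx u : u.1 < n -> gle u (incx u).
Proof. by move=> lt; rewrite /gle incx_fst // leqnSn leqnn. Qed.

Lemma gle_incy u : u.2 < n -> gle u (incy u).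
Proof. by move=> lt; rewrite /gle incy_snd // leqnSn leqnn. Qed.

Lemma gle_unit_step u w :
  gle u w -> u != w -> exists2 v, gle u v & gle v w /\ (v.1 - u.1) + (v.2 - u.2) = 1.
Proof.
move=> /andP[le1 le2] neuw; have [lt1|ge1] := ltnP u.1 w.1.
  have ltn1 : u.1 < n by have := ltn_ord w.1; lia.
  exists (incx u); first exact: gle_incx.
  by rewrite /gle incx_fst //= le2 lt1; split=> //; lia.
have lt2 : u.2 < w.2.
  rewrite ltn_neqAle le2 andbT; apply: contra_neq neuw => eq2.
  by apply: grid_eq => //; lia.
have ltn2 : u.2 < n by have := ltn_ord w.2; lia.
exists (incy u); first exact: gle_incy.
by rewrite /gle incy_snd //= le1 lt2; split=> //; lia.
Qed.

End Grid.

Section Rank.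
Variables (n : nat) (p : 'S_n).

(* hmove x y (resp. vmove x y) says that a collapsed triangle makes (x, y)
   beta-equivalent to (x + 1, y) (resp. (x, y + 1)); see beta_incx. *)
Definition hmove (x y : nat) := [exists i : 'I_n, (i == x :> nat) && (p i < y)].
Definition vmove (x y : nat) := [exists i : 'I_n, (p i == y :> nat) && (i < x)].

Definition rkset (x y : nat) := [set i : 'I_n | (i < x) || (p i < y)].
Definition rk (x y : nat) := #|rkset x y|.

Lemma hmove_lt x y : hmove x y -> x < n.
Proof. by case/existsP => i /andP[/eqP <- _]. Qed.

Lemma vmove_lt x y : vmove x y -> y < n.
Proof. by case/existsP => i /andP[/eqP <- _]. Qed.

Lemma rk_mono x x' y y' : x <= x' -> y <= y' -> rk x y <= rk x' y'.
Proof.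
move=> lex ley; apply/subset_leq_card/subsetP => i; rewrite !inE.
by case/orP => lti; apply/orP; [left|right]; apply: leq_trans lti _.
Qed.

Lemma rk_le x y : rk x y <= n.
Proof. by rewrite -[n]card_ord max_card. Qed.

Lemma rk_Sx x y : rk x.+1 y = rk x y + ((x < n) && ~~ hmove x y).
Proof.
case: ltnP => [ltxn|lenx] /=; last first.
  have full z : n <= z -> rkset z y = setT.
    by move=> lenz; apply/setP => i; rewrite !inE (leq_trans (ltn_ord i) lenz).
  by rewrite addn0 /rk !full // ltnW.
pose i := Ordinal ltxn; rewrite /rk.
have -> : rkset x.+1 y = i |: rkset x y.
  by apply/setP => j; rewrite !inE ltnS leq_eqVlt -val_eqE orbA.
have hmoveE : hmove x y = (p i < y).
  apply/existsP/idP => [[j /andP[/eqP ej]]|]; last by exists i; rewrite eqxx.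
  by have -> : j = i by apply: val_inj.
by rewrite cardsU1 inE ltnn hmoveE addnC.
Qed.

Lemma rk_Sy x y : rk x y.+1 = rk x y + ((y < n) && ~~ vmove x y).
Proof.
case: ltnP => [ltyn|leny] /=; last first.
  have full z : n <= z -> rkset x z = setT.
    by move=> lenz; apply/setP => i; rewrite !inE (leq_trans (ltn_ord (p i)) lenz) orbT.
  by rewrite addn0 /rk !full // ltnW.
pose i := (p^-1)%g (Ordinal ltyn); rewrite /rk.
have pi : p i = Ordinal ltyn by rewrite permKV.
have -> : rkset x y.+1 = i |: rkset x y.
  apply/setP => j; have ji : (j == i) = (p j == y :> nat).
    by rewrite -(inj_eq (@perm_inj _ p)) pi -val_eqE.
  by rewrite !inE ji ltnS (leq_eqVlt (p j)); case: (_ < x) (_ == _) => [] [].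
have vmoveE : vmove x y = (i < x).
  apply/existsP/idP => [[j /andP[/eqP ej]]|]; last by exists i; rewrite pi eqxx.
  by have -> : j = i by apply: (@perm_inj _ p); rewrite pi; apply: val_inj.
by rewrite cardsU1 inE pi ltnn orbF vmoveE addnC.
Qed.

Lemma rk_Sx_le x y : rk x.+1 y <= (rk x y).+1.
Proof. by rewrite rk_Sx -[(rk x y).+1]addn1 leq_add2l leq_b1. Qed.

Lemma rk_Sy_le x y : rk x y.+1 <= (rk x y).+1.
Proof. by rewrite rk_Sy -[(rk x y).+1]addn1 leq_add2l leq_b1. Qed.

Lemma rk_addn_le x y a b : rk (x + a) (y + b) <= rk x y + a + b.
Proof.
elim: b => [|b IHb].
  rewrite !addn0; elim: a => [|a IHa]; first by rewrite !addn0.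
  by rewrite !addnS (leq_trans (rk_Sx_le _ _)).
by rewrite !addnS (leq_trans (rk_Sy_le _ _)).
Qed.

Lemma rk_x0 x : x <= n -> rk x 0 = x.
Proof.
elim: x => [_|x IHx ltxn].
  by apply/eqP; rewrite cards_eq0; apply/eqP/setP => i; rewrite !inE.
have nhmove : ~~ hmove x 0 by apply/existsP => -[i]; rewrite ltn0 andbF.
by rewrite rk_Sx IHx ?(ltnW ltxn) // ltxn nhmove addn1.
Qed.

End Rank.

Section Closure.
Variables (n : nat) (p : 'S_n).
Implicit Types u v m : grid n.

Definition stable u := ~~ hmove p u.1 u.2 && ~~ vmove p u.1 u.2.
Definition rank u := rk p u.1 u.2.

Definition step u :=
  if hmove p u.1 u.2 then incx u else if vmove p u.1 u.2 then incy u else u.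

(* Each non-stable step raises u.1 + u.2 <= 2n, so 2n+1 steps reach a stable point. *)
Definition cl u := iter (2 * n).+1 step u.

Lemma incx_gle_stable u m : hmove p u.1 u.2 -> gle u m -> stable m -> gle (incx u) m.
Proof.
move=> hm /andP[le1 le2] /andP[nhm _]; rewrite /gle incx_fst ?(hmove_lt hm) // le2 andbT.
rewrite ltn_neqAle le1 andbT; apply: contraNneq nhm => eq1.
case/existsP: hm => i /andP[ei lti]; apply/existsP; exists i.
by rewrite -eq1 ei (leq_trans lti le2).
Qed.

Lemma incy_gle_stable u m : vmove p u.1 u.2 -> gle u m -> stable m -> gle (incy u) m.
Proof.
move=> vm /andP[le1 le2] /andP[_ nvm]; rewrite /gle incy_snd ?(vmove_lt vm) // le1.
rewrite ltn_neqAle le2 andbT; apply: contraNneq nvm => eq2.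
case/existsP: vm => i /andP[ei lti]; apply/existsP; exists i.
by rewrite -eq2 ei (leq_trans lti le1).
Qed.

Lemma gle_step u : gle u (step u).
Proof.
rewrite /step; case: ifP => [/hmove_lt/gle_incx //|_].
by case: ifP => [/vmove_lt/gle_incy //|_]; apply: gle_refl.
Qed.

Lemma step_gle_stable u m : gle u m -> stable m -> gle (step u) m.
Proof.
rewrite /step; case: ifP => [hm|_]; first exact: incx_gle_stable.
by case: ifP => [vm|_ //]; apply: incy_gle_stable.
Qed.

Lemma step_stable u : stable u -> step u = u.
Proof. by case/andP; rewrite /step => /negbTE -> /negbTE ->. Qed.

Lemma step_sum u : ~~ stable u -> (step u).1 + (step u).2 = (u.1 + u.2).+1 :> nat.
Proof.
rewrite /stable negb_and !negbK /step; case: ifP => [/hmove_lt lt _|_].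
  by rewrite incx_fst.
by case: ifP => [/vmove_lt lt _|//]; rewrite incy_snd ?addnS.
Qed.

Lemma stable_cl u : stable (cl u).
Proof.
suff [//|] : stable (cl u) \/ (2 * n).+1 <= (cl u).1 + (cl u).2.
  by have := ltn_ord (cl u).1; have := ltn_ord (cl u).2; lia.
rewrite /cl; elim: (2 * n).+1 => [|k [st|lek]]; [by right | by left; rewrite iterS step_stable|].
have [st|nst] := boolP (stable (iter k step u)); first by left; rewrite iterS step_stable.
by right; rewrite iterS step_sum.
Qed.

Lemma gle_cl u : gle u (cl u).
Proof.
rewrite /cl; elim: (2 * n).+1 => [|k IHk]; first exact: gle_refl.
by rewrite iterS; apply: gle_trans IHk (gle_step _).
Qed.

Lemma cl_gle_stable u m : gle u m -> stable m -> gle (cl u) m.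
Proof.
move=> le st; rewrite /cl; elim: (2 * n).+1 => [//|k IHk].
by rewrite iterS; apply: step_gle_stable.
Qed.

Lemma cl_stable m : stable m -> cl m = m.
Proof.
move=> st; rewrite /cl; elim: (2 * n).+1 => [//|k IHk].
by rewrite iterS IHk step_stable.
Qed.

Lemma cl_mono u v : gle u v -> gle (cl u) (cl v).
Proof. by move=> le; apply: cl_gle_stable (stable_cl _); apply: gle_trans le (gle_cl _). Qed.

Lemma cl_between u v : gle u v -> gle v (cl u) -> cl v = cl u.
Proof.
move=> le1 le2; apply: gle_anti; last exact: cl_mono.
exact: cl_gle_stable le2 (stable_cl _).
Qed.

Lemma cl_joinl u w : cl (gjoin (cl u) w) = cl (gjoin u w).
Proof.
apply: cl_between; first by apply: gle_join2r; apply: gle_cl.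
apply: gle_join; last by apply: gle_trans (gle_joinr u w) (gle_cl _).
by apply: cl_gle_stable (stable_cl _); apply: gle_trans (gle_joinl u w) (gle_cl _).
Qed.

Lemma cl_joinr u w : cl (gjoin u (cl w)) = cl (gjoin u w).
Proof. by rewrite gjoinC cl_joinl gjoinC. Qed.

Lemma cl_incx u : hmove p u.1 u.2 -> cl (incx u) = cl u.
Proof.
move=> hm; apply: cl_between; first exact/gle_incx/(hmove_lt hm).
exact: incx_gle_stable (gle_cl _) (stable_cl _).
Qed.

Lemma cl_incy u : vmove p u.1 u.2 -> cl (incy u) = cl u.
Proof.
move=> vm; apply: cl_between; first exact/gle_incy/(vmove_lt vm).
exact: incy_gle_stable (gle_cl _) (stable_cl _).
Qed.

Lemma rank_step u : rank (step u) = rank u.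
Proof.
rewrite /step /rank; case: ifP => [hm|_].
  by rewrite incx_fst ?(hmove_lt hm) // rk_Sx hm andbF addn0.
case: ifP => [vm|//].
by rewrite incy_snd ?(vmove_lt vm) // rk_Sy vm andbF addn0.
Qed.

Lemma rank_cl u : rank (cl u) = rank u.
Proof. by rewrite /cl; elim: (2 * n).+1 => [//|k IHk]; rewrite iterS rank_step. Qed.

Lemma rank_lt_stable m v : stable m -> gle m v -> m != v -> rank m < rank v.
Proof.
case/andP=> nhm nvm /andP[le1 le2] nemv; rewrite /rank.
have [lt1|] := ltnP m.1 v.1.
  have ltn1 : m.1 < n by have := ltn_ord v.1; lia.
  by apply: leq_trans (rk_mono p lt1 le2); rewrite rk_Sx ltn1 nhm addn1.
move=> ge1; have lt2 : m.2 < v.2.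
  rewrite ltn_neqAle le2 andbT; apply: contra_neq nemv => eq2.
  by apply: grid_eq => //; lia.
have ltn2 : m.2 < n by have := ltn_ord v.2; lia.
by apply: leq_trans (rk_mono p le1 lt2); rewrite rk_Sy ltn2 nvm addn1.
Qed.

Lemma rank_le_dist u v : gle u v -> rank v <= rank u + (v.1 - u.1) + (v.2 - u.2).
Proof.
case/andP=> le1 le2; have := rk_addn_le p u.1 u.2 (v.1 - u.1) (v.2 - u.2).
by rewrite !subnKC.
Qed.

End Closure.

Section Congruence.
Variable n : nat.
Implicit Types (r S : {set grid n * grid n}) (x y z : grid n).

Lemma is_jcongP r :
  reflect [/\ forall x, (x, x) \in r,
              forall x y, (x, y) \in r -> (y, x) \in r,
              forall x y z, (x, y) \in r -> (y, z) \in r -> (x, z) \in r &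
              forall x y z, (x, y) \in r -> (gjoin x z, gjoin y z) \in r]
          (is_jcong r).
Proof.
apply: (iffP and4P) => [[/forallP refl /forallP sym /forallP trans /forallP join]|].
  split=> [x|x y|x y z|x y z].
  - exact: refl.
  - exact/implyP/(forallP (sym x) y).
  - by move=> xy yz; apply: (implyP (forallP (forallP (trans x) y) z)); rewrite xy.
  - exact/implyP/(forallP (forallP (join x) y) z).
case=> refl sym trans join; split; apply/forallP => x; first exact: refl.
- by apply/forallP => y; apply/implyP; apply: sym.
- by do 2 apply/forallP => ?; apply/implyP => /andP[]; apply: trans.
- by do 2 apply/forallP => ?; apply/implyP; apply: join.
Qed.

Lemma cg_min S r : is_jcong r -> S \subset r -> cg S \subset r.
Proof. by move=> jr Sr; apply: bigcap_inf; rewrite jr Sr. Qed.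

Lemma cg_sub S : S \subset cg S.
Proof. by apply/bigcapsP => r /andP[]. Qed.

Lemma cg_jcong S : is_jcong (cg S).
Proof.
apply/is_jcongP; split=> [x|x y|x y z|x y z].
- by apply/bigcapP => r /andP[/is_jcongP[refl _ _ _] _].
- move=> /bigcapP xy; apply/bigcapP => r rr.
  by case/andP: (rr) => /is_jcongP[_ sym _ _] _; apply/sym/xy.
- move=> /bigcapP xy /bigcapP yz; apply/bigcapP => r rr.
  by case/andP: (rr) => /is_jcongP[_ _ trans _] _; apply: trans (xy r rr) (yz r rr).
- move=> /bigcapP xy; apply/bigcapP => r rr.
  by case/andP: (rr) => /is_jcongP[_ _ _ join] _; apply/join/xy.
Qed.

End Congruence.

Section Beta.
Variables (n : nat) (p : 'S_n).
Implicit Types u v : grid n.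

Definition clker : {set grid n * grid n} := [set uv | cl p uv.1 == cl p uv.2].

Lemma clker_jcong : is_jcong clker.
Proof.
apply/is_jcongP; split=> [x|x y|x y z|x y z]; rewrite !inE //.
- by rewrite eq_sym.
- by move=> /eqP-> /eqP->.
- by move=> /eqP e; rewrite -cl_joinl e cl_joinl.
Qed.

Lemma tri_clker k : tri p k \subset clker.
Proof.
pose a : grid n := (inord k, inord (p k).+1).
pose b : grid n := (inord k.+1, inord (p k)).
pose c : grid n := (inord k.+1, inord (p k).+1).
have cl_ac : cl p a = cl p c.
  have hm : hmove p a.1 a.2 by apply/existsP; exists k; rewrite /= inord_val inord_valS eqxx /=.
  rewrite -(cl_incx hm); congr (cl p _); apply: grid_eq; rewrite ?incx_fst ?(hmove_lt hm) //=.
  by rewrite inord_val inord_valS.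
have cl_bc : cl p b = cl p c.
  have vm : vmove p b.1 b.2 by apply/existsP; exists k; rewrite /= inord_val inord_valS eqxx /=.
  rewrite -(cl_incy vm); congr (cl p _); apply: grid_eq; rewrite ?incy_snd ?(vmove_lt vm) //=.
  by rewrite inord_val inord_valS.
apply/subsetP => uv; rewrite !inE.
by case/orP => [/orP[]|] /eqP -> /=; rewrite ?cl_ac ?cl_bc.
Qed.

Lemma beta_clker : beta p \subset clker.
Proof.
apply: cg_min clker_jcong _; apply/bigcupsP => k _.
exact: cg_min clker_jcong (tri_clker k).
Qed.

Lemma tri_beta k : tri p k \subset beta p.
Proof. by apply: subset_trans (cg_sub _) _; apply: subset_trans (cg_sub _); exact: (bigcup_max k). Qed.

Lemma beta_jcong : is_jcong (beta p).
Proof. exact: cg_jcong. Qed.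

Lemma beta_incx u : hmove p u.1 u.2 -> (u, incx u) \in beta p.
Proof.
move=> hm; have ltn1 := hmove_lt hm; case/existsP: hm => i /andP[/eqP ei lti].
have /is_jcongP[_ _ _ join] := beta_jcong.
have ac : ((inord i, inord (p i).+1), (inord i.+1, inord (p i).+1)) \in beta p.
  by apply: (subsetP (tri_beta i)); rewrite !inE eqxx !orbT.
have := join _ _ (ord0, u.2) ac.
have -> : gjoin (inord i, inord (p i).+1) (ord0, u.2) = u.
  by apply: grid_eq; rewrite ?gjoin_fst ?gjoin_snd /= ?inord_val ?inord_valS; lia.
have -> // : gjoin (inord i.+1, inord (p i).+1) (ord0, u.2) = incx u.
by apply: grid_eq; rewrite ?gjoin_fst ?gjoin_snd ?incx_fst //= ?inord_valS; lia.
Qed.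

Lemma beta_incy u : vmove p u.1 u.2 -> (u, incy u) \in beta p.
Proof.
move=> vm; have ltn2 := vmove_lt vm; case/existsP: vm => i /andP[/eqP ei lti].
have /is_jcongP[_ _ _ join] := beta_jcong.
have bc : ((inord i.+1, inord (p i)), (inord i.+1, inord (p i).+1)) \in beta p.
  by apply: (subsetP (tri_beta i)); rewrite !inE eqxx !orbT.
have := join _ _ (u.1, ord0) bc.
have -> : gjoin (inord i.+1, inord (p i)) (u.1, ord0) = u.
  by apply: grid_eq; rewrite ?gjoin_fst ?gjoin_snd /= ?inord_val ?inord_valS; lia.
have -> // : gjoin (inord i.+1, inord (p i).+1) (u.1, ord0) = incy u.
by apply: grid_eq; rewrite ?gjoin_fst ?gjoin_snd ?incy_snd //= ?inord_valS; lia.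
Qed.

Lemma beta_cl u : (u, cl p u) \in beta p.
Proof.
have /is_jcongP[refl _ trans _] := beta_jcong.
rewrite /cl; elim: (2 * n).+1 => [|k IHk]; first exact: refl.
rewrite iterS; apply: trans IHk _; rewrite {2}/step.
case: ifP => [/beta_incx //|_]; case: ifP => [/beta_incy //|_]; exact: refl.
Qed.

Lemma betaE u v : ((u, v) \in beta p) = (cl p u == cl p v).
Proof.
have /is_jcongP[_ sym trans _] := beta_jcong.
apply/idP/eqP => [/(subsetP beta_clker)|clE]; first by rewrite inE => /eqP.
by apply: trans (beta_cl u) _; rewrite clE; apply/sym/beta_cl.
Qed.

End Beta.

Section Quotient.
Variables (n : nat) (p : 'S_n).
Implicit Types (u v w : grid n) (A B C : quot n p).
Local Notation qj := (@qjoin n p).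

Lemma mem_cls u v : (v \in cls p u) = (cl p u == cl p v).
Proof. by rewrite inE betaE. Qed.

Lemma quot_cls A : exists u, val A = cls p u.
Proof. by case: A => A /= /imsetP[u _ ->]; exists u. Qed.

Lemma qrep_mem A : qrep A \in val A.
Proof.
rewrite /qrep; have [u ->] := quot_cls A.
by case: pickP => [//|/(_ u)/negbT/negP[]]; rewrite mem_cls.
Qed.

Lemma qcl_eq u v : cl p u = cl p v -> qcl p u = qcl p v.
Proof. by move=> clE; apply: val_inj; apply/setP => w; rewrite /= !mem_cls clE. Qed.

Lemma qcl_qrep A : qcl p (qrep A) = A.
Proof.
apply: val_inj; have := qrep_mem A; have [u ->] := quot_cls A.
by rewrite mem_cls => /eqP clE; apply/setP => w; rewrite !mem_cls clE.
Qed.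

Definition qpt A := cl p (qrep A).

Lemma qpt_qcl u : qpt (qcl p u) = cl p u.
Proof. by have := qrep_mem (qcl p u); rewrite mem_cls => /eqP. Qed.

Lemma qpt_inj : injective qpt.
Proof. by move=> A B /qcl_eq; rewrite !qcl_qrep. Qed.

Lemma stable_qpt A : stable p (qpt A).
Proof. exact: stable_cl. Qed.

Lemma qpt_join A B : qpt (qj A B) = cl p (gjoin (qpt A) (qpt B)).
Proof. by rewrite qpt_qcl /qpt cl_joinl cl_joinr. Qed.

Lemma jle_qpt A B : jle qj A B = gle (qpt A) (qpt B).
Proof.
apply/eqP/idP => [<-|le]; first by rewrite qpt_join; apply: gle_trans (gle_cl _ _); apply: gle_joinl.
by apply: qpt_inj; rewrite qpt_join gjoin_idPr // cl_stable // stable_qpt.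
Qed.

Definition qrank A := rank p (qpt A).

Lemma qrank_qcl u : qrank (qcl p u) = rank p u.
Proof. by rewrite /qrank qpt_qcl rank_cl. Qed.

Lemma qrank_lt A B : jlt qj A B -> qrank A < qrank B.
Proof.
case/andP=> neAB; rewrite jle_qpt => le; apply: rank_lt_stable (stable_qpt _) le _.
by apply: contra_neq neAB; apply: qpt_inj.
Qed.

Lemma qrank_le A : qrank A <= n.
Proof. exact: rk_le. Qed.

Lemma qjoin_jsl_axioms : jsl_axioms qj (qbot p).
Proof.
split=> [A B C|A B|A|A]; first by apply: qpt_inj; rewrite !qpt_join cl_joinl cl_joinr gjoinA.
- by rewrite /qjoin gjoinC.
- by apply: qpt_inj; rewrite qpt_join gjoin_idPr ?gle_refl // cl_stable // stable_qpt.
- by apply: qpt_inj; rewrite qpt_join qpt_qcl cl_joinl gjoin_idPr // cl_stable // stable_qpt.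
Qed.

Definition xaxis := [set qcl p (i, ord0) | i : 'I_n.+1].
Definition yaxis := [set qcl p (ord0, i) | i : 'I_n.+1].

Lemma mem_xaxis i : qcl p (i, ord0) \in xaxis.
Proof. by apply/imsetP; exists i. Qed.

Lemma mem_yaxis i : qcl p (ord0, i) \in yaxis.
Proof. by apply/imsetP; exists i. Qed.

Lemma jchain_xaxis : jchain qj xaxis.
Proof.
apply/forall_inP => _ /imsetP[i _ ->]; apply/forall_inP => _ /imsetP[j _ ->].
rewrite /jcomparable !jle_qpt !qpt_qcl.
by case: (leqP i j) => ij; apply/orP; [left|right]; apply: cl_mono; rewrite /gle /= ?ij ?(ltnW ij).
Qed.

Lemma jchain_yaxis : jchain qj yaxis.
Proof.
apply/forall_inP => _ /imsetP[i _ ->]; apply/forall_inP => _ /imsetP[j _ ->].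
rewrite /jcomparable !jle_qpt !qpt_qcl.
by case: (leqP i j) => ij; apply/orP; [left|right]; apply: cl_mono; rewrite /gle /= ?ij ?(ltnW ij).
Qed.

(* Every A is the join of its projections to the axes, so a join-irreducible A is one of them. *)
Lemma jirr0_axes A : jirr0 qj (qbot p) A -> (A \in xaxis) || (A \in yaxis).
Proof.
case/orP => [/eqP->|/andP[_ /forallP irr]]; first by rewrite mem_xaxis.
have /implyP/(_ _)/orP := forallP (irr (qcl p ((qrep A).1, ord0))) (qcl p (ord0, (qrep A).2)).
case=> [|/eqP<-|/eqP<-]; rewrite ?mem_xaxis ?mem_yaxis ?orbT //.
apply/eqP/qpt_inj; rewrite qpt_join !qpt_qcl cl_joinl cl_joinr.
suff -> : gjoin ((qrep A).1, ord0) (ord0, (qrep A).2) = qrep A by [].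
by apply: grid_eq; rewrite ?gjoin_fst ?gjoin_snd /=; lia.
Qed.

Lemma card_xaxis : #|xaxis| = n.+1.
Proof.
rewrite card_imset ?card_ord // => i j /(congr1 qrank).
rewrite !qrank_qcl /rank /= (rk_x0 p (ltnSE (ltn_ord i))) (rk_x0 p (ltnSE (ltn_ord j))).
exact: val_inj.
Qed.

Lemma qjoin_slim : slim qj (qbot p).
Proof. exact: slim_of_jchains jchain_xaxis jchain_yaxis jirr0_axes. Qed.

Lemma qjoin_semimodular : semimodular qj.
Proof.
move=> A B C /andP[/andP[neAB]]; rewrite jle_qpt => leAB /forallP covAB.
have neAB' : qpt A != qpt B by apply: contra_neq neAB; apply: qpt_inj.
have [v leAv [levB unit]] := gle_unit_step leAB neAB'.
have Bv : qcl p v = B.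
  have ltAv : jlt qj A (qcl p v).
    have : qrank A < qrank (qcl p v).
      rewrite qrank_qcl; apply: rank_lt_stable (stable_qpt A) leAv _.
      by apply/eqP => eAv; move: unit; rewrite -eAv !subnn.
    rewrite /jlt jle_qpt qpt_qcl (gle_trans leAv (gle_cl _ _)) andbT.
    by apply: contraTneq => <-; rewrite ltnn.
  apply/eqP/negPn/negP => nevB; move: (covAB (qcl p v)).
  by rewrite ltAv /jlt nevB jle_qpt qpt_qcl cl_gle_stable ?stable_qpt.
apply: (jcovers_eq_of_rank (@qrank_lt)).
  by rewrite jle_qpt !qpt_join; apply/cl_mono/gle_join2r.
rewrite /qrank !qpt_join -Bv qpt_qcl cl_joinl !rank_cl.
have := rank_le_dist p (gle_join2r (qpt C) leAv).
by rewrite !gjoin_fst !gjoin_snd; lia.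
Qed.

Lemma qjoin_length : length_is qj n.
Proof.
split; first by exists xaxis; split; [exact: jchain_xaxis | exact: card_xaxis].
by move=> X; apply: (jchain_card_le (@qrank_lt)) qrank_le.
Qed.

End Quotient.

Theorem lemma4p2 (n : nat) (p : 'S_n) :
  jsl_axioms (@qjoin n p) (qbot p) /\
  slim (@qjoin n p) (qbot p) /\
  semimodular (@qjoin n p) /\
  length_is (@qjoin n p) n.
Proof.
split; first exact: qjoin_jsl_axioms.
split; first exact: qjoin_slim.
by split; [exact: qjoin_semimodular | exact: qjoin_length].
Qed.
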